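(* Let $I \subset \mathbb{R}$ be a closed interval, let $0<\alpha\le 1$, and let $f:I\to\mathbb{R}$ be $\alpha$-H\''older continuous, i.e. there is $C>0$ with $|f(t)-f(s)|\le C|t-s|^\alpha$ for all $t,s\in I$. Then $$\dim_{A,reg}^\theta \operatorname{Graph}(f) \leq \frac{2-\alpha-\theta}{1-\theta}$$ for all $\theta\in(0,\alpha)$.
   Context: $\operatorname{Graph}(f)=\{(t,f(t)):t\in I\}\subset\mathbb{R}^2$. For a bounded set $F\subset\mathbb{R}^2$ and $r>0$, $N(F,r)$ denotes the least number of sets of diameter at most $r$ needed to cover $F$, and $D(\mathbf z,R)$ is the closed disc of radius $R$ centered at $\mathbf z$. For $E\subset\mathbb{R}^2$ and $\theta\in(0,1)$, the regularized (upper) Assouad spectrum is $$\dim_{A,reg}^\theta(E)=\inf\{\gamma>0:\ \exists C>0 \text{ such that } N(D(\mathbf z,R)\cap E,r)\le C(R/r)^\gamma \text{ for all } 0<r\le R^{1/\theta}<R<1 \text{ and all } \mathbf z\in E\}.$$ Equivalently, $\dim_{A,reg}^\theta(E)=\sup_{0<\theta'<\theta}\dim_A^{\theta'}(E)$, where $\dim_A^{\theta}(E)$ is defined in the same way but with the scales restricted to $r=R^{1/\theta}$. *)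

From HB Require Import structures.
From mathcomp Require Import all_boot all_order all_algebra.
From mathcomp Require Import all_classical all_reals all_analysis.
Set Implicit Arguments. Unset Strict Implicit. Unset Printing Implicit Defensive.
Import Order.TTheory GRing.Theory Num.Theory.
Local Open Scope classical_set_scope.
Local Open Scope ring_scope.

Section Defs.
Variable R : realType.

Definition dist2 (x y : R * R) : R :=
  Num.sqrt ((x.1 - y.1) ^+ 2 + (x.2 - y.2) ^+ 2).

Definition disc (z : R * R) (rho : R) : set (R * R) :=
  [set w | dist2 z w <= rho].

Definition diam_le (S : set (R * R)) (r : R) : Prop :=
  forall x y, S x -> S y -> dist2 x y <= r.

Definition covers (F : set (R * R)) (r : R) (n : nat) : Prop :=
  exists S : nat -> set (R * R),
    (forall i, (i < n)%N -> diam_le (S i) r) /\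
    F `<=` \bigcup_(i in [set i | (i < n)%N]) S i.

(* N(F, r): least number of sets of diameter <= r covering F (+oo if none) *)
Definition covnum (F : set (R * R)) (r : R) : \bar R :=
  ereal_inf [set (n%:R)%:E | n in covers F r].

Definition graph (f : R -> R) (I : set R) : set (R * R) :=
  [set p | I p.1 /\ p.2 = f p.1].

Definition dimA_reg (theta : R) (E : set (R * R)) : \bar R :=
  ereal_inf [set g%:E | g in
    [set g : R | 0 < g /\ exists C : R, 0 < C /\
       forall (z : R * R) (rho r : R), E z -> 0 < r -> 0 < rho ->
         r <= rho `^ (1 / theta) -> rho `^ (1 / theta) < rho -> rho < 1 ->
         (covnum (disc z rho `&` E) r <= (C * (rho / r) `^ g)%:E)%E]].

End Defs.

From HB Require Import structures.
From mathcomp Require Import all_boot all_order all_algebra.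
From mathcomp Require Import all_classical all_reals all_analysis.
From mathcomp Require Import ring lra.
Import Order.TTheory GRing.Theory Num.Theory.
Local Open Scope classical_set_scope.
Local Open Scope ring_scope.

(* Cover D(z, rho) /\ Graph(f) by squares of side r/2 on a grid.  The disc meets
   about rho/r columns of width r/2, and by Hoelder continuity the graph over one
   column lies in a window of height 2C(r/2)^alpha, which needs about r^(alpha-1)
   squares; so N <~ (rho/r) r^(alpha-1).  On the scales r <= rho^(1/theta) we have
   r^(theta-1) <= rho/r, hence r^(alpha-1) = (r^(theta-1))^((1-alpha)/(1-theta))
   <= (rho/r)^((1-alpha)/(1-theta)), and N <~ (rho/r)^((2-alpha-theta)/(1-theta)). *)

Section Covers.
Context {R : realType}.
Implicit Types (F G : set (R * R)) (r : R).

Lemma covnum_le {F r n} : covers F r n -> (covnum F r <= n%:R%:E)%E.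
Proof. by move=> Fn; apply: ereal_inf_lbound; exists n. Qed.

Lemma sub_covers F G r n : F `<=` G -> covers G r n -> covers F r n.
Proof. by move=> FG [S [Sr GS]]; exists S; split=> // p /FG /GS. Qed.

Lemma covers_grid {F r} {N M : nat} {S : nat -> nat -> set (R * R)} :
  (forall j k, diam_le (S j k) r) ->
  (forall p, F p -> exists j k, [/\ (j < N)%N, (k < M)%N & S j k p]) ->
  covers F r (N * M).
Proof.
move=> Sr FS; exists (fun i => S (i %/ M) (i %% M))%N.
split=> [i _|p /FS[j [k [jN kM Sp]]]]; first exact: Sr.
have M_gt0 : (0 < M)%N by case: (M) kM.
exists (j * M + k)%N; last by rewrite /= divnMDl // divn_small // addn0 modnMDl modn_small.
rewrite /= (leq_trans (_ : _ < j * M + M)%N) ?ltn_add2l //.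
by rewrite -mulSnr leq_mul2r jN orbT.
Qed.

Lemma dist2_ge_fst (x y : R * R) : `|x.1 - y.1| <= dist2 x y.
Proof. by rewrite /dist2 -sqrtr_sqr ler_wsqrtr // lerDl sqr_ge0. Qed.

Lemma diam_le_square (c d h : R) : 0 <= h ->
  diam_le [set p | c <= p.1 <= c + h /\ d <= p.2 <= d + h] (2 * h).
Proof.
move=> h_ge0 p q [/andP[? ?] /andP[? ?]] [/andP[? ?] /andP[? ?]].
rewrite /dist2 -(ger0_norm (_ : 0 <= 2 * h)) ?mulr_ge0 // -sqrtr_sqr.
apply: ler_wsqrtr.
have dx : (p.1 - q.1) ^+ 2 <= h ^+ 2 by nra.
have dy : (p.2 - q.2) ^+ 2 <= h ^+ 2 by nra.
nra.
Qed.

End Covers.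

Section Truncation.
Context {R : archiRealFieldType}.

Lemma truncnS_le (x : R) : 0 <= x -> (Num.truncn x).+1%:R <= x + 1.
Proof. by move=> x_ge0; rewrite -natr1 lerD2r truncn_le. Qed.

Lemma grid_index {x0 L h t : R} : 0 < h -> x0 <= t <= x0 + L ->
  exists2 j : nat, (j < (Num.truncn (L / h)).+1)%N &
    x0 + j%:R * h <= t <= x0 + j%:R * h + h.
Proof.
move=> h_gt0 /andP[x0t tL].
have pos : 0 <= (t - x0) / h by apply: divr_ge0; lra.
exists (Num.truncn ((t - x0) / h)).
  by rewrite ltnS le_truncn // ler_pM2r ?invr_gt0 // lerBlDl.
have /andP[lo hi] := truncn_itv pos.
rewrite ler_pdivlMr // in lo.
rewrite ltr_pdivrMr // -natr1 mulrDl mul1r in hi.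
apply/andP; split; lra.
Qed.

End Truncation.

Section HolderGraph.
Context {R : realType} {a b C alpha : R} {f : R -> R}.
Hypotheses (C_ge0 : 0 <= C) (alpha_ge0 : 0 <= alpha).
Hypothesis f_holder : forall t s : R, a <= t <= b -> a <= s <= b ->
  `|f t - f s| <= C * `|t - s| `^ alpha.

(* [Num.max a c] is a point of [a, b] in the column [c, c + h] as soon as the
   column meets [a, b] at all. *)
Lemma holder_osc_column {c h t : R} : a <= t <= b -> c <= t <= c + h ->
  `|f t - f (Num.max a c)| <= C * h `^ alpha.
Proof.
move=> tI /andP[ct tch]; have /andP[ta tb] := tI.
have cu : c <= Num.max a c by rewrite le_max lexx orbT.
have ut : Num.max a c <= t by rewrite ge_max ta ct.
have u_in : a <= Num.max a c <= b by rewrite le_max lexx /=; lra.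
apply: le_trans (f_holder _ _ tI u_in) _.
rewrite ler_wpM2l // ge0_ler_powR ?nnegrE //; first lra.
by rewrite ger0_norm; lra.
Qed.

Lemma graph_strip_covers (x0 L h : R) : 0 < h ->
  covers ([set p | x0 <= p.1 <= x0 + L] `&` graph f [set t | a <= t <= b]) (2 * h)
    ((Num.truncn (L / h)).+1 * (Num.truncn (2 * C * h `^ alpha / h)).+1).
Proof.
move=> h_gt0.
pose y j := f (Num.max a (x0 + j%:R * h)) - C * h `^ alpha.
pose square j k := [set p : R * R | x0 + j%:R * h <= p.1 <= x0 + j%:R * h + h
  /\ y j + k%:R * h <= p.2 <= y j + k%:R * h + h].
apply: (covers_grid (S := square)) => [j k|p]; first exact: diam_le_square (ltW h_gt0).
move=> [/(grid_index h_gt0)[j jN pj] /= [tI fp]].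
have [k kM fk] : exists2 k : nat, (k < (Num.truncn (2 * C * h `^ alpha / h)).+1)%N &
    y j + k%:R * h <= f p.1 <= y j + k%:R * h + h.
  apply: grid_index => //.
  by move: (holder_osc_column tI pj); rewrite ler_norml /y; lra.
by exists j, k; split; rewrite // /square /= fp.
Qed.

Lemma disc_graph_covers (z : R * R) (rho r : R) : 0 < r ->
  covers (disc z rho `&` graph f [set t | a <= t <= b]) r
    ((Num.truncn (2 * rho / (r / 2))).+1 *
     (Num.truncn (2 * C * (r / 2) `^ alpha / (r / 2))).+1).
Proof.
move=> r_gt0; have h_gt0 : 0 < r / 2 by rewrite divr_gt0.
have := graph_strip_covers (z.1 - rho) (2 * rho) (r / 2) h_gt0.
rewrite (mulrC 2 (r / 2)) divfK ?pnatr_eq0 //; apply: sub_covers.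
move=> p [zp gp]; split=> //=.
by move: (le_trans (dist2_ge_fst z p) zp); rewrite ler_norml; lra.
Qed.

End HolderGraph.

Section Exponents.
Context {R : realType}.

Lemma powR_le_of_le_root (th r rho : R) : 0 < th -> 0 <= r -> 0 <= rho ->
  r <= rho `^ (1 / th) -> r `^ th <= rho.
Proof.
move=> th_gt0 r_ge0 rho_ge0 r_le.
apply: le_trans (_ : _ <= (rho `^ (1 / th)) `^ th) _.
  by apply: ge0_ler_powR; rewrite ?nnegrE ?powR_ge0 // ltW.
by rewrite -powRrM mul1r mulVf ?gt_eqF // powRr1.
Qed.

Lemma powR_ratio_le (alpha th r rho : R) : th < 1 -> alpha <= 1 -> 0 < r ->
  r `^ th <= rho -> r `^ alpha / r <= (rho / r) `^ ((1 - alpha) / (1 - th)).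
Proof.
move=> th_lt1 alpha_le1 r_gt0 r_le.
have e_ge0 : 0 <= (1 - alpha) / (1 - th) by apply: divr_ge0; lra.
have r_neq0 : r != 0 by rewrite gt_eqF.
have -> : r `^ alpha / r = (r `^ th / r) `^ ((1 - alpha) / (1 - th)).
  rewrite -{2 4}(powRr1 (ltW r_gt0)) -!powRB ?r_neq0 ?implybT // -powRrM; congr (_ `^ _); field; lra.
have rho_ge0 : 0 <= rho := le_trans (powR_ge0 _ _) r_le.
apply: ge0_ler_powR; rewrite // ?nnegrE ?divr_ge0 ?powR_ge0 ?(ltW r_gt0) //.
by rewrite ler_wpM2r // invr_ge0 ltW.
Qed.

Lemma grid_count_le (alpha th C rho r : R) :
  0 < th -> th < alpha -> alpha <= 1 -> 0 <= C -> 0 < r ->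
  r <= rho `^ (1 / th) -> rho `^ (1 / th) < rho ->
  ((Num.truncn (2 * rho / (r / 2))).+1 *
   (Num.truncn (2 * C * (r / 2) `^ alpha / (r / 2))).+1)%:R
  <= 5 * (4 * C + 1) * (rho / r) `^ ((2 - alpha - th) / (1 - th)).
Proof.
move=> th_gt0 th_lt_alpha alpha_le1 C_ge0 r_gt0 r_le rho_gt.
set q := rho / r; set e := (1 - alpha) / (1 - th).
have rho_gt0 : 0 < rho by lra.
have q_ge1 : 1 <= q by rewrite /q ler_pdivlMr // mul1r; lra.
have qe_ge1 : 1 <= q `^ e by rewrite -(powRr0 q) ler_powR // divr_ge0 //; lra.
have N_le : (Num.truncn (2 * rho / (r / 2))).+1%:R <= 5 * q.
  rewrite (_ : 2 * rho / (r / 2) = 4 * q); last by rewrite /q; field; lra.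
  have := @truncnS_le _ (4 * q); lra.
have M_le : (Num.truncn (2 * C * (r / 2) `^ alpha / (r / 2))).+1%:R <= (4 * C + 1) * q `^ e.
  have half_le : (r / 2) `^ alpha <= r `^ alpha by apply: ge0_ler_powR; rewrite ?nnegrE; lra.
  have gain : r `^ alpha / r <= q `^ e.
    apply: powR_ratio_le => //; first lra.
    exact: powR_le_of_le_root (ltW r_gt0) (ltW rho_gt0) r_le.
  rewrite (_ : 2 * C * (r / 2) `^ alpha / (r / 2) = 4 * C * ((r / 2) `^ alpha / r)); last by field; lra.
  have w_le : (r / 2) `^ alpha / r <= q `^ e.
    by apply: le_trans gain; rewrite ler_wpM2r // invr_ge0 ltW.
  have w_ge0 : 0 <= (r / 2) `^ alpha / r by rewrite divr_ge0 ?powR_ge0 ?ltW.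
  have := @truncnS_le _ (4 * C * ((r / 2) `^ alpha / r)); nra.
rewrite natrM (_ : (2 - alpha - th) / (1 - th) = 1 + e); last by rewrite /e; field; lra.
have q_gt0 : 0 < q by lra.
have q_neq0 : q != 0 by rewrite gt_eqF.
rewrite powRD ?q_neq0 ?implybT // powRr1 ?(ltW q_gt0) //.
apply: le_trans (ler_pM _ _ N_le M_le) _; rewrite ?ler0n //; lra.
Qed.

End Exponents.

Theorem theorem1p1 (R : realType) (a b : R) (f : R -> R) (alpha : R) :
  a <= b -> 0 < alpha -> alpha <= 1 ->
  (exists C : R, 0 < C /\
     forall t s : R, a <= t <= b -> a <= s <= b ->
       `|f t - f s| <= C * `|t - s| `^ alpha) ->
  forall theta : R, 0 < theta -> theta < alpha ->
    (dimA_reg theta (graph f [set t : R | (a <= t <= b)%R])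
      <= ((2 - alpha - theta) / (1 - theta))%:E)%E.
Proof.
move=> _ alpha_gt0 alpha_le1 [C [C_gt0 f_holder]] th th_gt0 th_lt_alpha.
apply: ereal_inf_lbound; exists ((2 - alpha - th) / (1 - th)) => //; split.
  by apply: divr_gt0; lra.
exists (5 * (4 * C + 1)); split; first lra.
move=> z rho r _ r_gt0 _ r_le rho_gt _.
have cover := disc_graph_covers (ltW C_gt0) (ltW alpha_gt0) f_holder z rho r r_gt0.
apply: le_trans (covnum_le cover) _.
by rewrite lee_fin grid_count_le // ltW.
Qed.
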